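(* Let $\mathbb{T}=\mathbb{R}/2\pi\mathbb{Z}$. For $j=1,\dots,m$ let $c_j\in C^\infty(\mathbb{T};\mathbb{C})$ and let $P_j(D_x)$ be a pseudo-differential operator on $\mathbb{T}^n$, $P_j(D_x)u(x)=\sum_{\xi\in\mathbb{Z}^n}e^{ix\cdot\xi}p_j(\xi)\widehat{u}(\xi)$, with $|p_j(\xi)|\le C|\xi|^{\nu_j}$ for all $\xi\in\mathbb{Z}^n$ (some $C>0$, $\nu_j\in\mathbb{R}$). Let $L_j=D_t+c_j(t)P_j(D_x)$ on $\mathbb{T}^{n+1}$, $L=L_1\circ\cdots\circ L_m$, and $\mathcal{M}_j(t,\xi)=c_j(t)p_j(\xi)$. Assume that for each $j$ there is a positive constant $\eta_j$ with $\operatorname{Im}\mathcal{M}_j(t,\xi)\ge-\eta_j$ for all $t\in\mathbb{T}$, $\xi\in\mathbb{Z}^n$. Suppose that for some $k\in\{1,\dots,m\}$ there is a singular solution $u_k$ of $L_k$, i.e. $u_k\in\mathcal{D}'(\mathbb{T}^{n+1})\setminus C^\infty(\mathbb{T}^{n+1})$ with $L_ku_k\in C^\infty(\mathbb{T}^{n+1})$, and distributions $u_{k+1},\dots,u_m\in\mathcal{D}'(\mathbb{T}^{n+1})$ satisfying $$u_{k+j}=L_{k+j+1}u_{k+j+1},\qquad j\in\{0,\dots,m-k-1\}.$$ Then $L$ is not globally hypoelliptic.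
   Context: $D_t=-i\partial_t$; $\widehat{u}(\xi)=(2\pi)^{-n}\int_{\mathbb{T}^n}e^{-ix\cdot\xi}u(x)\,dx$. An operator $\mathcal{P}$ on $\mathbb{T}^N$ is globally hypoelliptic if $u\in\mathcal{D}'(\mathbb{T}^N)$ and $\mathcal{P}u\in C^\infty(\mathbb{T}^N)$ imply $u\in C^\infty(\mathbb{T}^N)$. *)

From Stdlib Require Import Reals Lra Lia ZArith.
From Stdlib Require Vector.
From Coquelicot Require Import Coquelicot.
Open Scope R_scope.

(* Periodic distributions on T^N are identified with their Fourier
   coefficients (convention hat u(xi) = (2pi)^{-N} int e^{-ix.xi} u):
   D'(T^N)  <->  sequences on Z^N of at most polynomial growth,
   C^oo(T^N) <-> rapidly decreasing sequences on Z^N.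
   A distribution on T^{n+1} = T_t x T^n_x is a function of (tau, xi). *)

Definition Zn (n : nat) := Vector.t Z n.

Definition znorm {n : nat} (xi : Zn n) : R :=
  sqrt (Vector.fold_right (fun a s => IZR a ^ 2 + s) xi 0).

Definition bracket {n : nat} (tau : Z) (xi : Zn n) : R :=
  sqrt (1 + IZR tau ^ 2 + znorm xi ^ 2).

Definition FSeq (n : nat) := Z -> Zn n -> C.

Definition is_distr {n : nat} (u : FSeq n) : Prop :=
  exists (K : R) (N : nat), 0 < K /\
    forall tau xi, Cmod (u tau xi) <= K * bracket tau xi ^ N.

Definition is_smooth {n : nat} (u : FSeq n) : Prop :=
  forall N : nat, exists K : R,
    forall tau xi, Cmod (u tau xi) * bracket tau xi ^ N <= K.

(* c in C^oo(T;C), given by its Fourier coefficients (rapidly decreasing) *)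
Definition smooth_coeffs (c : Z -> C) : Prop :=
  forall N : nat, exists K : R,
    forall tau, Cmod (c tau) * sqrt (1 + IZR tau ^ 2) ^ N <= K.

(* sum over Z (for absolutely summable families) *)
Definition zsum (f : Z -> C) : C :=
  (Series (fun k => Re (f (Z.of_nat k))) + Series (fun k => Re (f (- Z.of_nat (S k))%Z)),
   Series (fun k => Im (f (Z.of_nat k))) + Series (fun k => Im (f (- Z.of_nat (S k))%Z))).

Definition cexpi (tau : Z) (t : R) : C := (cos (IZR tau * t), sin (IZR tau * t)).

Definition ceval (c : Z -> C) (t : R) : C :=
  zsum (fun tau => Cmult (c tau) (cexpi tau t)).

(* Symbol bound |p(xi)| <= K |xi|^nu, for all xi in Z^n, with the
   convention 0^nu = 0 (nu>0), 1 (nu=0), +oo (nu<0). *)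
Definition symbol_bound {n : nat} (K nu : R) (p : Zn n -> C) : Prop :=
  forall xi : Zn n,
    (znorm xi <> 0 -> Cmod (p xi) <= K * Rpower (znorm xi) nu) /\
    (znorm xi = 0 -> (0 < nu -> p xi = RtoC 0) /\ (nu = 0 -> Cmod (p xi) <= K)).

(* L_j = D_t + c_j(t) P_j(D_x) on Fourier side:
   (L u)^(tau,xi) = tau u^(tau,xi) + p(xi) sum_s c^(tau - s) u^(s,xi). *)
Definition Lop {n : nat} (c : Z -> C) (p : Zn n -> C) (u : FSeq n) : FSeq n :=
  fun tau xi =>
    Cplus (Cmult (RtoC (IZR tau)) (u tau xi))
          (Cmult (p xi) (zsum (fun s => Cmult (c (tau - s)%Z) (u s xi)))).

(* Lcomp c p m = L_1 o L_2 o ... o L_m *)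
Fixpoint Lcomp {n : nat} (c : nat -> Z -> C) (p : nat -> Zn n -> C) (m : nat)
  : FSeq n -> FSeq n :=
  match m with
  | O => fun u => u
  | S m' => fun u => Lcomp c p m' (Lop (c m) (p m) u)
  end.

Definition globally_hypoelliptic {n : nat} (A : FSeq n -> FSeq n) : Prop :=
  forall u : FSeq n, is_distr u -> is_smooth (A u) -> is_smooth u.

From Stdlib Require Import Reals ZArith Lra Lia Psatz.
From Stdlib Require Vector.
From Coquelicot Require Import Coquelicot.
Open Scope R_scope.

(* Every L_j maps C^oo to C^oo: on the Fourier side it multiplies by tau and
   by the polynomially bounded symbol p_j(xi), and it convolves in tau with the
   rapidly decreasing coefficients of c_j, which preserves rapid decay by
   Peetre's inequality.  The relations u_{k+j} = L_{k+j+1} u_{k+j+1} then give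
   L u_m = L_1 ... L_{k-1} (L_k u_k), which is smooth, while u_m is singular:
   otherwise u_{m-1}, ..., u_k would all be smooth.  So u_m contradicts global
   hypoellipticity of L. *)

Definition inv_1_sq (k : nat) : R := / (1 + INR k ^ 2).

Lemma inv_1_sq_pos (k : nat) : 0 < inv_1_sq k.
Proof. unfold inv_1_sq. apply Rinv_0_lt_compat. pose proof (pos_INR k). nra. Qed.

(* Telescoping: 1 / (1 + k^2) <= 4 / (k + 1) - 4 / (k + 2) for k >= 1. *)
Lemma sum_inv_1_sq_le (n : nat) : sum_f_R0 inv_1_sq n <= 4 - 4 / (INR n + 2).
Proof.
  induction n as [|n IH].
  - unfold inv_1_sq. simpl. lra.
  - simpl sum_f_R0. rewrite S_INR.
    pose proof (pos_INR n) as Hn.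
    assert (Hstep : inv_1_sq (S n) <= 4 / (INR n + 2) - 4 / (INR n + 1 + 2)).
    { unfold inv_1_sq. rewrite S_INR.
      replace (4 / (INR n + 2) - 4 / (INR n + 1 + 2))
        with (/ ((INR n + 2) * (INR n + 3) / 4)) by (field; lra).
      apply Rinv_le_contravar; nra. }
    lra.
Qed.

Lemma ex_series_inv_1_sq : ex_series inv_1_sq.
Proof.
  destruct (growing_cv (sum_f_R0 inv_1_sq)) as [l Hl].
  - intro n. simpl. pose proof (inv_1_sq_pos (S n)). lra.
  - exists 4. intros x [n ->]. pose proof (sum_inv_1_sq_le n).
    assert (0 < 4 / (INR n + 2)) by (pose proof (pos_INR n); apply Rdiv_lt_0_compat; lra).
    lra.
  - exists l. apply is_series_Reals. exact Hl.
Qed.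

Lemma Rabs_Series_le (x b : nat -> R) :
  (forall k, Rabs (x k) <= b k) -> ex_series b -> Rabs (Series x) <= Series b.
Proof.
  intros Hxb Hb.
  assert (Habs : ex_series (fun k => Rabs (x k))).
  { apply (@ex_series_le R_AbsRing R_CompleteNormedModule _ b); auto.
    intro k. change (Rabs (Rabs (x k)) <= b k). rewrite Rabs_Rabsolu. auto. }
  eapply Rle_trans; [apply Series_Rabs, Habs|].
  apply Series_le; auto. intro k. split; auto. apply Rabs_pos.
Qed.

Lemma Rabs_Im_le_Cmod (z : C) : Rabs (Im z) <= Cmod z.
Proof.
  pose proof (Rmax_Cmod z). pose proof (Rmax_r (Rabs (fst z)) (Rabs (snd z))).
  unfold Im. lra.
Qed.

Lemma Cmod_le_Rabs_Re_Im (z : C) : Cmod z <= Rabs (Re z) + Rabs (Im z).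
Proof.
  apply Rsqr_incr_0_var.
  - rewrite !Rsqr_pow2, Cmod2_alt, <- (pow2_abs (Re z)), <- (pow2_abs (Im z)).
    pose proof (Rabs_pos (Re z)). pose proof (Rabs_pos (Im z)). nra.
  - pose proof (Rabs_pos (Re z)). pose proof (Rabs_pos (Im z)). lra.
Qed.

Lemma Cmod_zsum_le (g : Z -> C) (D : R) : 0 <= D ->
  (forall s, Cmod (g s) <= D * / (1 + IZR s ^ 2)) ->
  Cmod (zsum g) <= 4 * D * Series inv_1_sq.
Proof.
  intros HD Hg.
  assert (Hpos : forall k, Cmod (g (Z.of_nat k)) <= D * inv_1_sq k).
  { intro k. unfold inv_1_sq. rewrite INR_IZR_INZ. apply Hg. }
  assert (Hneg : forall k, Cmod (g (- Z.of_nat (S k))%Z) <= D * inv_1_sq k).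
  { intro k. eapply Rle_trans; [apply Hg|]. apply Rmult_le_compat_l; auto.
    pose proof (pos_INR k). unfold inv_1_sq.
    apply Rinv_le_contravar; [nra|]. rewrite opp_IZR, <- INR_IZR_INZ, S_INR. nra. }
  assert (Hseries : forall x : nat -> R, (forall k, Rabs (x k) <= D * inv_1_sq k) ->
            Rabs (Series x) <= D * Series inv_1_sq).
  { intros x Hx. rewrite <- Series_scal_l.
    apply Rabs_Series_le; auto. apply (ex_series_scal_l D inv_1_sq), ex_series_inv_1_sq. }
  pose proof (Hseries _ (fun k => Rle_trans _ _ _ (re_le_Cmod _) (Hpos k))).
  pose proof (Hseries _ (fun k => Rle_trans _ _ _ (re_le_Cmod _) (Hneg k))).
  pose proof (Hseries _ (fun k => Rle_trans _ _ _ (Rabs_Im_le_Cmod _) (Hpos k))).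
  pose proof (Hseries _ (fun k => Rle_trans _ _ _ (Rabs_Im_le_Cmod _) (Hneg k))).
  eapply Rle_trans; [apply Cmod_le_Rabs_Re_Im|]. unfold zsum, Re, Im in *; cbn [fst snd] in *.
  pose proof (Rabs_triang (Series (fun k => fst (g (Z.of_nat k))))
                          (Series (fun k => fst (g (- Z.of_nat (S k))%Z)))).
  pose proof (Rabs_triang (Series (fun k => snd (g (Z.of_nat k))))
                          (Series (fun k => snd (g (- Z.of_nat (S k))%Z)))).
  lra.
Qed.

Definition sum_sq {n : nat} (xi : Zn n) : R :=
  Vector.fold_right (fun a s => IZR a ^ 2 + s) xi 0.

Lemma sum_sq_nat {n : nat} (xi : Zn n) : exists z, sum_sq xi = IZR z /\ (0 <= z)%Z.
Proof.
  induction xi as [|a n xi [z [Hz Hz0]]].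
  - exists 0%Z. split; [reflexivity | lia].
  - exists (a * a + z)%Z. split.
    + change (IZR a ^ 2 + sum_sq xi = IZR (a * a + z)).
      rewrite Hz, plus_IZR, mult_IZR. ring.
    + nia.
Qed.

Lemma sum_sq_ge0 {n : nat} (xi : Zn n) : 0 <= sum_sq xi.
Proof. destruct (sum_sq_nat xi) as [z [-> Hz]]. apply IZR_le, Hz. Qed.

Lemma sum_sq_eq0 {n : nat} (xi : Zn n) : sum_sq xi = 0 -> xi = Vector.const 0%Z n.
Proof.
  induction xi as [|a n xi IH]; intro H0.
  - reflexivity.
  - change (IZR a ^ 2 + sum_sq xi = 0) in H0. pose proof (sum_sq_ge0 xi).
    assert (Ha : a = 0%Z) by (apply eq_IZR; nra).
    subst a. simpl. f_equal. apply IH. nra.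
Qed.

Lemma znorm_sq {n : nat} (xi : Zn n) : znorm xi ^ 2 = sum_sq xi.
Proof. apply pow2_sqrt, sum_sq_ge0. Qed.

Lemma znorm_eq0 {n : nat} (xi : Zn n) : znorm xi = 0 -> xi = Vector.const 0%Z n.
Proof. intro H0. apply sum_sq_eq0. rewrite <- znorm_sq, H0. ring. Qed.

(* Because |xi|^2 is an integer. *)
Lemma znorm_ge1 {n : nat} (xi : Zn n) : znorm xi <> 0 -> 1 <= znorm xi.
Proof.
  intro Hne. destruct (sum_sq_nat xi) as [z [Hz Hz0]].
  assert (z <> 0%Z).
  { intros ->. apply Hne. unfold znorm. fold (sum_sq xi). rewrite Hz. apply sqrt_0. }
  rewrite <- sqrt_1. apply sqrt_le_1_alt. fold (sum_sq xi). rewrite Hz. apply IZR_le. lia.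
Qed.

Lemma Rle_of_pow2_le (x y : R) : 0 <= y -> x ^ 2 <= y ^ 2 -> x <= y.
Proof. intros Hy Hxy. apply Rsqr_incr_0_var; [rewrite !Rsqr_pow2|]; assumption. Qed.

Section Bracket.

Variables (n : nat) (tau : Z) (xi : Zn n).

Lemma bracket_sq : bracket tau xi ^ 2 = 1 + IZR tau ^ 2 + znorm xi ^ 2.
Proof.
  apply pow2_sqrt.
  pose proof (pow2_ge_0 (IZR tau)). pose proof (pow2_ge_0 (znorm xi)). lra.
Qed.

Lemma bracket_ge1 : 1 <= bracket tau xi.
Proof.
  apply Rle_of_pow2_le; [apply sqrt_pos|]. rewrite bracket_sq.
  pose proof (pow2_ge_0 (IZR tau)). pose proof (pow2_ge_0 (znorm xi)). lra.
Qed.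

Lemma Rabs_le_bracket : Rabs (IZR tau) <= bracket tau xi.
Proof.
  apply Rle_of_pow2_le; [apply sqrt_pos|]. rewrite bracket_sq, pow2_abs.
  pose proof (pow2_ge_0 (znorm xi)). lra.
Qed.

Lemma znorm_le_bracket : znorm xi <= bracket tau xi.
Proof.
  apply Rle_of_pow2_le; [apply sqrt_pos|]. rewrite bracket_sq.
  pose proof (pow2_ge_0 (IZR tau)). lra.
Qed.

Lemma sq_le_bracket_sq : 1 + IZR tau ^ 2 <= bracket tau xi ^ 2.
Proof. rewrite bracket_sq. pose proof (pow2_ge_0 (znorm xi)). lra. Qed.

End Bracket.

Lemma bracket_le_shift {n : nat} (tau s : Z) (xi : Zn n) :
  bracket tau xi <= 2 * sqrt (1 + IZR (tau - s) ^ 2) * bracket s xi.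
Proof.
  assert (Hd : 0 <= 1 + IZR (tau - s) ^ 2) by (pose proof (pow2_ge_0 (IZR (tau - s))); lra).
  pose proof (sqrt_pos (1 + IZR (tau - s) ^ 2)). pose proof (bracket_ge1 n s xi).
  apply Rle_of_pow2_le; [nra|].
  rewrite !Rpow_mult_distr, pow2_sqrt by exact Hd. rewrite !bracket_sq, minus_IZR.
  set (t := IZR tau). set (r := IZR s). set (z := znorm xi).
  pose proof (pow2_ge_0 z). pose proof (pow2_ge_0 (t - r)). pose proof (pow2_ge_0 (t - 2 * r)).
  assert (0 <= (t - r) ^ 2 * (r ^ 2 + z ^ 2)) by (apply Rmult_le_pos; nra).
  nra.
Qed.

Section Smooth.

Variable n : nat.

Definition poly_bounded (a : FSeq n) : Prop :=
  exists (A : R) (M : nat), 0 <= A /\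
    forall tau xi, Cmod (a tau xi) <= A * bracket tau xi ^ M.

Definition tconv (c : Z -> C) (f : FSeq n) : FSeq n :=
  fun tau xi => zsum (fun s => Cmult (c (tau - s)%Z) (f s xi)).

Lemma is_smooth_plus (f g : FSeq n) :
  is_smooth f -> is_smooth g -> is_smooth (fun tau xi => Cplus (f tau xi) (g tau xi)).
Proof.
  intros Hf Hg N. destruct (Hf N) as [Kf HKf]. destruct (Hg N) as [Kg HKg].
  exists (Kf + Kg). intros tau xi.
  pose proof (HKf tau xi). pose proof (HKg tau xi).
  pose proof (Cmod_triangle (f tau xi) (g tau xi)).
  assert (0 <= bracket tau xi ^ N) by (apply pow_le; pose proof (bracket_ge1 n tau xi); lra).
  nra.
Qed.

Lemma is_smooth_mul (a f : FSeq n) :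
  poly_bounded a -> is_smooth f -> is_smooth (fun tau xi => Cmult (a tau xi) (f tau xi)).
Proof.
  intros [A [M [HA Ha]]] Hf N. destruct (Hf (M + N)%nat) as [Kf HKf].
  exists (A * Kf). intros tau xi.
  specialize (Ha tau xi). specialize (HKf tau xi). rewrite pow_add in HKf.
  rewrite Cmod_mult.
  assert (0 <= bracket tau xi ^ N) by (apply pow_le; pose proof (bracket_ge1 n tau xi); lra).
  pose proof (Cmod_ge_0 (f tau xi)).
  apply Rle_trans with (A * (Cmod (f tau xi) * (bracket tau xi ^ M * bracket tau xi ^ N))).
  - replace (A * (Cmod (f tau xi) * (bracket tau xi ^ M * bracket tau xi ^ N)))
      with (A * bracket tau xi ^ M * (Cmod (f tau xi) * bracket tau xi ^ N)) by ring.
    rewrite Rmult_assoc. apply Rmult_le_compat_r; [nra | exact Ha].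
  - apply Rmult_le_compat_l; assumption.
Qed.

Lemma poly_bounded_tau : poly_bounded (fun tau _ => RtoC (IZR tau)).
Proof.
  exists 1, 1%nat. split; [lra|]. intros tau xi.
  rewrite Cmod_R, pow_1, Rmult_1_l. apply Rabs_le_bracket.
Qed.

Lemma poly_bounded_symbol (K nu : R) (p : Zn n -> C) :
  0 <= K -> symbol_bound K nu p -> poly_bounded (fun _ xi => p xi).
Proof.
  intros HK Hp.
  set (M := Z.abs_nat (up nu)).
  assert (HM : nu <= INR M).
  { unfold M. rewrite INR_IZR_INZ, Zabs2Nat.id_abs, abs_IZR.
    destruct (archimed nu) as [Hup _]. pose proof (Rle_abs (IZR (up nu))). lra. }
  set (p0 := Cmod (p (Vector.const 0%Z n))).
  assert (Hp0 : 0 <= p0) by apply Cmod_ge_0.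
  exists (K + p0), M. split; [lra|]. intros tau xi.
  assert (Hbr : 1 <= bracket tau xi ^ M) by apply pow_R1_Rle, bracket_ge1.
  destruct (Req_dec (znorm xi) 0) as [H0 | Hne].
  - rewrite (znorm_eq0 xi H0) at 1. fold p0. nra.
  - pose proof (znorm_ge1 xi Hne).
    assert (Rpower (znorm xi) nu <= bracket tau xi ^ M).
    { apply Rle_trans with (Rpower (znorm xi) (INR M)); [apply Rle_Rpower; assumption|].
      rewrite Rpower_pow by lra. apply pow_incr. split; [lra | apply znorm_le_bracket]. }
    pose proof (proj1 (Hp xi) Hne). nra.
Qed.

Lemma tconv_term_le (c : Z -> C) (f : FSeq n) (N : nat) (Kc Kf : R) (tau s : Z) (xi : Zn n) :
  (forall t, Cmod (c t) * sqrt (1 + IZR t ^ 2) ^ N <= Kc) ->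
  (forall s xi, Cmod (f s xi) * bracket s xi ^ (N + 2) <= Kf) ->
  Cmod (Cmult (c (tau - s)%Z) (f s xi)) * bracket tau xi ^ N
    <= 2 ^ N * Kc * (Kf * / (1 + IZR s ^ 2)).
Proof.
  intros Hc Hf.
  set (L := sqrt (1 + IZR (tau - s) ^ 2)). set (bs := bracket s xi).
  assert (Hbs : 1 <= bs) by apply bracket_ge1.
  assert (Hq : 0 < 1 + IZR s ^ 2) by (pose proof (pow2_ge_0 (IZR s)); lra).
  assert (Hshift : bracket tau xi ^ N <= 2 ^ N * L ^ N * bs ^ N).
  { rewrite <- !Rpow_mult_distr. apply pow_incr.
    split; [pose proof (bracket_ge1 n tau xi); lra | apply bracket_le_shift]. }
  assert (HcL : Cmod (c (tau - s)%Z) * L ^ N <= Kc) by apply Hc.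
  assert (Hfs : Cmod (f s xi) * bs ^ N <= Kf * / (1 + IZR s ^ 2)).
  { pose proof (Hf s xi) as Hfs. rewrite pow_add in Hfs. fold bs in Hfs.
    pose proof (sq_le_bracket_sq n s xi) as Hsq. fold bs in Hsq.
    assert (0 <= Cmod (f s xi) * bs ^ N)
      by (apply Rmult_le_pos; [apply Cmod_ge_0 | apply pow_le; lra]).
    apply Rmult_le_reg_r with (1 + IZR s ^ 2); [lra|].
    replace (Kf * / (1 + IZR s ^ 2) * (1 + IZR s ^ 2)) with Kf by (field; lra). nra. }
  rewrite Cmod_mult.
  assert (0 <= Cmod (c (tau - s)%Z) * L ^ N)
    by (apply Rmult_le_pos; [apply Cmod_ge_0 | apply pow_le, sqrt_pos]).
  assert (0 <= Cmod (f s xi) * bs ^ N)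
    by (apply Rmult_le_pos; [apply Cmod_ge_0 | apply pow_le; lra]).
  assert (0 <= Cmod (c (tau - s)%Z) * Cmod (f s xi))
    by (apply Rmult_le_pos; apply Cmod_ge_0).
  assert (0 < 2 ^ N) by (apply pow_lt; lra).
  apply Rle_trans with (2 ^ N * (Cmod (c (tau - s)%Z) * L ^ N) * (Cmod (f s xi) * bs ^ N)).
  - replace (2 ^ N * (Cmod (c (tau - s)%Z) * L ^ N) * (Cmod (f s xi) * bs ^ N))
      with (Cmod (c (tau - s)%Z) * Cmod (f s xi) * (2 ^ N * L ^ N * bs ^ N)) by ring.
    apply Rmult_le_compat_l; assumption.
  - apply Rmult_le_compat; [nra | assumption | | assumption].
    apply Rmult_le_compat_l; [lra | assumption].
Qed.

Lemma smooth_coeffs_bound_ge0 (c : Z -> C) (N : nat) (Kc : R) :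
  (forall t, Cmod (c t) * sqrt (1 + IZR t ^ 2) ^ N <= Kc) -> 0 <= Kc.
Proof.
  intro Hc. eapply Rle_trans; [|apply (Hc 0%Z)].
  apply Rmult_le_pos; [apply Cmod_ge_0 | apply pow_le, sqrt_pos].
Qed.

Lemma is_smooth_bound_ge0 (f : FSeq n) (N : nat) (Kf : R) :
  (forall tau xi, Cmod (f tau xi) * bracket tau xi ^ N <= Kf) -> 0 <= Kf.
Proof.
  intro Hf. eapply Rle_trans; [|apply (Hf 0%Z (Vector.const 0%Z n))].
  apply Rmult_le_pos; [apply Cmod_ge_0 | apply pow_le, sqrt_pos].
Qed.

Lemma is_smooth_tconv (c : Z -> C) (f : FSeq n) :
  smooth_coeffs c -> is_smooth f -> is_smooth (tconv c f).
Proof.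
  intros Hc Hf N. destruct (Hc N) as [Kc HKc]. destruct (Hf (N + 2)%nat) as [Kf HKf].
  pose proof (smooth_coeffs_bound_ge0 c N Kc HKc).
  pose proof (is_smooth_bound_ge0 f (N + 2) Kf HKf).
  exists (4 * (2 ^ N * Kc * Kf) * Series inv_1_sq). intros tau xi.
  set (b := bracket tau xi ^ N). set (D := 2 ^ N * Kc * Kf).
  assert (Hb : 0 < b) by (apply pow_lt; pose proof (bracket_ge1 n tau xi); lra).
  assert (HD : 0 <= D / b).
  { apply Rdiv_le_0_compat; [|exact Hb].
    apply Rmult_le_pos; [apply Rmult_le_pos; [apply pow_le; lra|]|]; assumption. }
  assert (Hterm : forall s, Cmod (Cmult (c (tau - s)%Z) (f s xi)) <= D / b * / (1 + IZR s ^ 2)).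
  { intro s. pose proof (tconv_term_le c f N Kc Kf tau s xi HKc HKf) as Hs. fold b in Hs.
    assert (0 < 1 + IZR s ^ 2) by (pose proof (pow2_ge_0 (IZR s)); lra).
    apply Rmult_le_reg_r with b; [exact Hb|].
    replace (D / b * / (1 + IZR s ^ 2) * b) with (2 ^ N * Kc * (Kf * / (1 + IZR s ^ 2)))
      by (unfold D; field; lra).
    exact Hs. }
  pose proof (Cmod_zsum_le _ _ HD Hterm) as Hsum. unfold tconv.
  fold D. replace (4 * D * Series inv_1_sq) with (4 * (D / b) * Series inv_1_sq * b) by (field; lra).
  apply Rmult_le_compat_r; lra.
Qed.

Lemma is_smooth_Lop (c : Z -> C) (p : Zn n -> C) (K nu : R) (f : FSeq n) :
  smooth_coeffs c -> 0 <= K -> symbol_bound K nu p -> is_smooth f -> is_smooth (Lop c p f).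
Proof.
  intros Hc HK Hp Hf. apply is_smooth_plus.
  - apply (is_smooth_mul (fun tau _ => RtoC (IZR tau)) f poly_bounded_tau Hf).
  - apply (is_smooth_mul (fun _ xi => p xi) (tconv c f)).
    + exact (poly_bounded_symbol K nu p HK Hp).
    + exact (is_smooth_tconv c f Hc Hf).
Qed.

End Smooth.

Section Composition.

Variables (n m : nat) (c : nat -> Z -> C) (p : nat -> Zn n -> C).

Lemma is_smooth_Lcomp (i : nat) (f : FSeq n) :
  (forall j, (1 <= j <= i)%nat -> forall g, is_smooth g -> is_smooth (Lop (c j) (p j) g)) ->
  is_smooth f -> is_smooth (Lcomp c p i f).
Proof.
  revert f. induction i as [|i IH]; intros f HL Hf; simpl.
  - exact Hf.
  - apply IH; [intros j Hj; apply HL; lia|]. apply HL; [lia | exact Hf].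
Qed.

Variables (k : nat) (u : nat -> FSeq n).

Hypothesis Hrel : forall j, (k + j + 1 <= m)%nat ->
  u (k + j)%nat = Lop (c (k + j + 1)%nat) (p (k + j + 1)%nat) (u (k + j + 1)%nat).

Lemma Lcomp_chain (d : nat) : (k + d <= m)%nat ->
  Lcomp c p (k + d) (u (k + d)%nat) = Lcomp c p k (u k).
Proof.
  induction d as [|d IH]; intro Hd.
  - rewrite Nat.add_0_r. reflexivity.
  - rewrite <- IH by lia. rewrite (Hrel d) by lia.
    replace (k + d + 1)%nat with (k + S d)%nat by lia.
    rewrite Nat.add_succ_r. reflexivity.
Qed.

Lemma not_smooth_chain (d : nat) :
  (forall j, (1 <= j <= m)%nat -> forall g, is_smooth g -> is_smooth (Lop (c j) (p j) g)) ->
  ~ is_smooth (u k) -> (k + d <= m)%nat -> ~ is_smooth (u (k + d)%nat).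
Proof.
  intros HL Hsing. induction d as [|d IH]; intros Hd Hsmooth.
  - rewrite Nat.add_0_r in Hsmooth. exact (Hsing Hsmooth).
  - apply IH; [lia|]. rewrite (Hrel d) by lia.
    apply HL; [lia|]. replace (k + d + 1)%nat with (k + S d)%nat by lia. exact Hsmooth.
Qed.

End Composition.

Theorem theorem10 (n m : nat) (c : nat -> Z -> C) (p : nat -> Zn n -> C)
  (nu eta : nat -> R)
  (Hc : forall j, (1 <= j <= m)%nat -> smooth_coeffs (c j))
  (Hp : forall j, (1 <= j <= m)%nat -> exists K, 0 < K /\ symbol_bound K (nu j) (p j))
  (Heta : forall j, (1 <= j <= m)%nat ->
     0 < eta j /\ forall (t : R) (xi : Zn n), - eta j <= Im (Cmult (ceval (c j) t) (p j xi)))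
  (k : nat) (Hk : (1 <= k <= m)%nat) (u : nat -> FSeq n)
  (Huk : is_distr (u k) /\ ~ is_smooth (u k) /\ is_smooth (Lop (c k) (p k) (u k)))
  (Hui : forall i, (k < i <= m)%nat -> is_distr (u i))
  (Hrel : forall j, (k + j + 1 <= m)%nat ->
     u (k + j)%nat = Lop (c (k + j + 1)%nat) (p (k + j + 1)%nat) (u (k + j + 1)%nat)) :
  ~ globally_hypoelliptic (Lcomp c p m).
Proof.
  destruct Huk as [Hdistr [Hsing HLsmooth]].
  assert (HL : forall j, (1 <= j <= m)%nat ->
            forall g, is_smooth g -> is_smooth (Lop (c j) (p j) g)).
  { intros j Hj g Hg. destruct (Hp j Hj) as [K [HK Hsymb]].
    exact (is_smooth_Lop n (c j) (p j) K (nu j) g (Hc j Hj) (Rlt_le _ _ HK) Hsymb Hg). }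
  assert (Hm : (k + (m - k))%nat = m) by lia.
  intro Hhypo.
  apply (not_smooth_chain n m c p k u Hrel (m - k) HL Hsing); [lia|]. rewrite Hm.
  apply Hhypo.
  - destruct (Nat.eq_dec k m) as [-> | Hkm]; [exact Hdistr | apply Hui; lia].
  - rewrite <- Hm, (Lcomp_chain n m c p k u Hrel (m - k)) by lia.
    destruct k as [|k']; [lia|]. simpl.
    apply is_smooth_Lcomp; [intros j Hj; apply HL; lia | exact HLsmooth].
Qed.
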